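(* Let $\rho\ge1$. Any deterministic LOCAL algorithm has the following lower bound on its round complexity, where $\Omega$ hides an absolute constant, if it is guaranteed to output, on every $n$-vertex graph, a $\rho$-approximate maximum cardinality matching. Specifically, it must use $\Omega(\log^* n/\rho)$ rounds on some $n$-vertex ring (cycle) graph. In particular, this holds even when restricted to graphs of maximum degree 2.
   Context: **Approximate matchings.** A matching $M$ of a graph is a $\rho$-approximate maximum cardinality matching if $|M|\ge \tau/\rho$, where $\tau$ is the maximum size of a matching in the graph. **LOCAL model on graphs.** Computation proceeds in synchronous rounds: - Each vertex does unbounded local computation and exchanges unbounded messages with its neighbours. - Vertices have unique $O(\log n)$-bit IDs. - After $t$ rounds, each vertex outputs which of its incident edges are in the matching. *)

From HB Require Import structures.
From mathcomp Require Import all_boot.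
From Stdlib Require Import Reals.

Set Implicit Arguments. Unset Strict Implicit. Unset Printing Implicit Defensive.

Definition simple_graph (n : nat) (e : rel 'I_n) : Prop :=
  symmetric e /\ irreflexive e.

Definition max_degree_le (n : nat) (e : rel 'I_n) (d : nat) : Prop :=
  forall v : 'I_n, (#|[set u | e v u]| <= d)%N.

(** The n-vertex ring (cycle) 0 - 1 - ... - (n-1) - 0 (a ring for n >= 3). *)
Definition ring_adj (n : nat) : rel 'I_n :=
  fun i j => (nat_of_ord j == (i.+1 %% n)%N) || (nat_of_ord i == (j.+1 %% n)%N).

Definition is_matching (n : nat) (e m : rel 'I_n) : Prop :=
  symmetric m /\ subrel m e /\ forall v : 'I_n, (#|[set u | m v u]| <= 1)%N.

Definition msize (n : nat) (m : rel 'I_n) : nat :=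
  #|[set p : 'I_n * 'I_n | m p.1 p.2 && (nat_of_ord p.1 < nat_of_ord p.2)%N]|.

(** M is a rho-approximate maximum cardinality matching of e:
    |M| >= tau / rho, i.e. tau <= rho * |M|, where tau is the maximum size of a
    matching, i.e. every matching m has |m| <= rho * |M|. *)
Definition approx_max_matching (rho : R) (n : nat) (e M : rel 'I_n) : Prop :=
  is_matching e M /\
  forall m : rel 'I_n, is_matching e m -> (INR (msize m) <= rho * INR (msize M))%R.

(** * Deterministic LOCAL algorithms (full-information form)
   A vertex holds a state (unbounded type).  Initially it knows n and its own ID.
   In each synchronous round every vertex sends its whole state to all neighbours
   (unbounded messages) and updates its state from its own state and the map
   "neighbour ID |-> that neighbour's state" (None if no neighbour has this ID).
   After each round a vertex may decide its output: a map from neighbour IDs to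
   booleans saying which incident edges are in the matching.  The first decision
   is final. *)
Record local_alg := LocalAlg {
  St : Type;
  init : nat -> nat -> St;                     (* n, own ID *)
  step : St -> (nat -> option St) -> St;
  decide : St -> option (nat -> bool) }.

Fixpoint state (A : local_alg) (n : nat) (e : rel 'I_n) (id : 'I_n -> nat)
    (r : nat) (v : 'I_n) : St A :=
  match r with
  | 0 => @init A n (id v)
  | r'.+1 =>
      @step A (state A e id r' v)
        (fun k => if [pick u | e v u && (id u == k)] is Some u
                  then Some (state A e id r' u) else None)
  end.

Fixpoint output (A : local_alg) (n : nat) (e : rel 'I_n) (id : 'I_n -> nat)
    (r : nat) (v : 'I_n) : option (nat -> bool) :=
  match r with
  | 0 => @decide A (state A e id 0 v)
  | r'.+1 => if output A e id r' v is Some o then Some o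
             else @decide A (state A e id r'.+1 v)
  end.

Definition all_decided (A : local_alg) (n : nat) (e : rel 'I_n) (id : 'I_n -> nat)
    (r : nat) : Prop :=
  forall v : 'I_n, output A e id r v <> None.

Definition says (A : local_alg) (n : nat) (e : rel 'I_n) (id : 'I_n -> nat)
    (r : nat) (u v : 'I_n) : bool :=
  if output A e id r u is Some o then o (id v) else false.

Definition out_matching (A : local_alg) (n : nat) (e : rel 'I_n) (id : 'I_n -> nat)
    (r : nat) : rel 'I_n :=
  fun u v => [&& e u v, says A e id r u v & says A e id r v u].

(** IDs: unique, O(log n) bits, i.e. taken from {0, ..., n^c - 1} *)
Definition valid_ids (c n : nat) (id : 'I_n -> nat) : Prop :=
  injective id /\ forall v : 'I_n, (id v < n ^ c)%N.

Definition correct_on (rho : R) (A : local_alg) (n : nat) (e : rel 'I_n)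
    (id : 'I_n -> nat) : Prop :=
  exists r : nat,
    all_decided A e id r /\
    (forall u v : 'I_n, e u v -> says A e id r u v = says A e id r v u) /\
    approx_max_matching rho e (out_matching A e id r).

Fixpoint logstar_aux (fuel n : nat) : nat :=
  match fuel with
  | 0 => 0
  | f.+1 => if (n <= 1)%N then 0 else (logstar_aux f (Nat.log2 n)).+1
  end.
Definition logstar (n : nat) : nat := logstar_aux n n.

From HB Require Import structures.
From mathcomp Require Import all_boot zify.
From Stdlib Require Import Reals Lra Classical FunctionalExtensionality.
From Stdlib Require ClassicalDescription PeanoNat.
(* Reals overrides the nat notations of ssrnat; bring them back. *)
From mathcomp Require Import ssrnat.

Set Implicit Arguments. Unset Strict Implicit. Unset Printing Implicit Defensive.

(* Suppose A stops within t rounds on every n-vertex ring.  In a path, far from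
   its ends, the output of a vertex depends only on the IDs within distance t,
   so whether the edge between positions t and t+1 of an increasing window of
   2t+2 IDs is selected is a 2-colouring of such windows.  A Ramsey argument for
   sliding windows, whose bound is a tower of height O(t + m), gives an
   increasing ID sequence of length m, with m of order log* n, all of whose
   windows have the same colour; these windows also occur on a ring, so A has
   decided there by round t.  Label a path with this sequence: if the colour
   selects the edge, two adjacent edges are selected; otherwise only the 2t
   edges near the ends can be, whereas the path has a matching of size m/2.
   Hence rho * 2t >= m/2, i.e. t = Omega(log* n / rho). *)

Definition classicb (P : Prop) : bool :=
  if ClassicalDescription.excluded_middle_informative P then true else false.

Lemma classicbP (P : Prop) : reflect P (classicb P).
Proof.
by rewrite /classicb; case: ClassicalDescription.excluded_middle_informative => H;
  constructor.
Qed.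

Section WindowRamsey.

Variables (N : nat) (C : Type) (col : seq nat -> C).

Definition mono_windows (w : nat) (c : C) (s : seq nat) : Prop :=
  [/\ sorted ltn s, all (fun x => x < N) s &
      forall i, i + w <= size s -> col (take w (drop i s)) = c].

Definition ends_mono_windows (w : nat) (c : C) (T : seq nat) (l : nat) : Prop :=
  exists p, mono_windows w c (p ++ T) /\ size (p ++ T) = l.

Lemma ends_mono_windows_self w c T :
  sorted ltn T -> all (fun x => x < N) T -> size T < w ->
  ends_mono_windows w c T (size T).
Proof. by move=> HT HN Hw; exists [::]; split=> //; split=> // i /= Hi; lia. Qed.

Lemma mono_windows_rcons w c p y T x :
  mono_windows w c (p ++ y :: T) -> sorted ltn (y :: T ++ [:: x]) -> x < N ->
  size (y :: T) = w.-1 -> 0 < w -> col (y :: T ++ [:: x]) = c ->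
  mono_windows w c (p ++ y :: T ++ [:: x]).
Proof.
move=> [Hs Ha Hw] Hs2 Hx Hsz Hw0 Hc; split.
- by move: Hs; rewrite !sorted_cat_cons => /andP [-> _].
- move: Ha; rewrite !all_cat /= !all_cat /= Hx andbT.
  by case/and3P=> -> -> ->.
- move=> i; rewrite !size_cat /= size_cat /= => Hi.
  have [Hlt|Hge] := ltnP (i + w) (size p + (size T).+2).
  + have -> : p ++ y :: T ++ [:: x] = (p ++ y :: T) ++ [:: x] by rewrite -catA.
    rewrite drop_cat size_cat /=.
    have -> : i < size p + (size T).+1 by lia.
    rewrite takel_cat; last by rewrite size_drop size_cat /=; lia.
    by apply: Hw; rewrite size_cat /=; lia.
  + have -> : i = size p by move: Hsz Hge Hi Hw0 => /= Hsz; lia.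
    rewrite drop_cat ltnn subnn /= take_oversize //= size_cat /=.
    by move: Hsz => /= Hsz; lia.
Qed.

Lemma ends_mono_windows_shift w c y T x l :
  ends_mono_windows w c (y :: T) l -> sorted ltn (y :: T ++ [:: x]) -> x < N ->
  size (y :: T) = w.-1 -> 0 < w -> col (y :: T ++ [:: x]) = c ->
  ends_mono_windows w c (T ++ [:: x]) l.+1.
Proof.
move=> [p [Hp <-]] Hs Hx Hsz Hw Hc; exists (rcons p y); split.
- by rewrite -cats1 -catA; exact: mono_windows_rcons.
- by rewrite !size_cat size_rcons /=; lia.
Qed.

End WindowRamsey.

Fixpoint window_ramsey_bound (j q L : nat) : nat :=
  if j is j'.+1 then window_ramsey_bound j' ((2 ^ L) ^ q) j'.+2 else q * L.

Lemma sum_count_colours (C : finType) (col : nat -> C) (l : seq nat) :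
  \sum_(c : C) count (fun x => col x == c) l = size l.
Proof.
elim: l => [|x l IH] /=; first by rewrite big1.
rewrite big_split /= IH (bigD1 (col x)) //= eqxx big1 ?addn0 //.
by move=> c /negbTE; rewrite eq_sym => ->.
Qed.

Lemma mono_windows1 (C : finType) (L N : nat) (col : seq nat -> C) :
  #|C| * L <= N -> exists s c, mono_windows N col 1 c s /\ L <= size s.
Proof.
case: L => [|L] HF; first by exists [::], (col [::]).
have [c Hc] : exists c, L < count (fun x => col [:: x] == c) (iota 0 N).
  apply/existsP; apply: contraT => /existsPn Hn.
  have : N <= \sum_(c : C) L.
    rewrite -(size_iota 0 N) -(sum_count_colours (fun x => col [:: x])).
    by apply: leq_sum => c _; rewrite -ltnS ltnNge Hn.
  rewrite sum_nat_const => HN.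
  have : #|C| * L.+1 <= #|C| * L by exact: leq_trans HF HN.
  have : 0 < #|C| by apply/card_gt0P; exists (col [::]).
  nia.
exists [seq x <- iota 0 N | col [:: x] == c], c; split; last by rewrite size_filter.
split.
- exact: sorted_filter ltn_trans _ _ (iota_ltn_sorted 0 N).
- by apply/allP => x; rewrite mem_filter mem_iota add0n => /andP [_ /andP [_ ->]].
- move=> i; rewrite addn1 => Hi; rewrite (drop_nth 0 Hi) /= take0.
  by have := mem_nth 0 Hi; rewrite mem_filter => /andP [/eqP -> _].
Qed.

Lemma mono_windows_step j (C : finType) (L N : nat) (col : seq nat -> C) :
  (forall (C' : finType) (col' : seq nat -> C'),
     window_ramsey_bound j #|C'| j.+2 <= N ->
     exists s c, mono_windows N col' j.+1 c s /\ j.+2 <= size s) ->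
  window_ramsey_bound j.+1 #|C| L <= N ->
  exists s c, mono_windows N col j.+2 c s /\ L <= size s.
Proof.
move=> IH /= HF; apply: NNPP => Hnone.
have Hshort s c : mono_windows N col j.+2 c s -> size s < L.
  by move=> Hs; rewrite ltnNge; apply/negP => HL; apply: Hnone; exists s, c.
(* Colour each window of width [j.+1] by the lengths below [L] of the
   monochromatic sequences it can end, for every colour. *)
pose profile T : {ffun C -> {ffun 'I_L -> bool}} :=
  [ffun c => [ffun l : 'I_L => classicb (ends_mono_windows N col j.+2 c T l)]].
have := IH _ profile; rewrite !card_ffun card_bool card_ord.
case/(_ HF) => [[|y s] [c' [[Hsort Hall Hw] Hsz]]] //.
have Hj : j < size s := Hsz.
set T := take j.+1 (y :: s); set T' := take j.+1 s; set x := nth 0 s j.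
have HTT' : profile T = profile T'.
  have h0 := Hw 0; have h1 := Hw 1; rewrite /= ?drop0 in h0 h1.
  by rewrite /T /T' h0 ?h1 //=; lia.
have HT'x : y :: T' = T ++ [:: x].
  by rewrite /T /T' /x /= (take_nth 0) ?cats1.
have HT : T = y :: take j s by [].
set c := col (T ++ [:: x]).
have Hsorted : sorted ltn (T ++ [:: x]).
  by rewrite -HT'x; exact: (take_sorted j.+2 Hsort).
have HT' : T' = take j s ++ [:: x] by have := congr1 behead HT'x; rewrite HT.
have Hshift l : ends_mono_windows N col j.+2 c T l ->
                ends_mono_windows N col j.+2 c T' l.+1.
  rewrite HT' {1}HT => Hl; apply: ends_mono_windows_shift Hl _ _ _ _ _ => //.
  - by move/allP: Hall; apply; rewrite inE mem_nth ?orbT.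
  - by rewrite /= size_take Hj.
have Hback l : l < L -> ends_mono_windows N col j.+2 c T' l ->
               ends_mono_windows N col j.+2 c T l.
  move=> Hl HT'l; apply/classicbP.
  have := congr1 (fun f : {ffun C -> {ffun 'I_L -> bool}} => f c (Ordinal Hl)) HTT'.
  by rewrite /profile !ffunE /= => ->; apply/classicbP.
have Hends i : ends_mono_windows N col j.+2 c T (j.+1 + i).
  elim: i => [|i IHi].
    have -> : j.+1 + 0 = size T by rewrite addn0 /T /= size_take Hj.
    apply: ends_mono_windows_self; first exact: take_sorted.
      by apply/allP => z /mem_take Hz; move/allP: Hall; apply.
    by rewrite /T /= size_take Hj.
  have [p [Hp Hsize]] := Hshift _ IHi.
  by rewrite addnS; apply: Hback (Hshift _ IHi); rewrite -Hsize; exact: Hshort Hp.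
have [p [Hp Hsize]] := Hends L.
by have := Hshort _ _ Hp; rewrite Hsize; lia.
Qed.

Lemma window_ramsey j (C : finType) (L N : nat) (col : seq nat -> C) :
  window_ramsey_bound j #|C| L <= N ->
  exists s c, mono_windows N col j.+1 c s /\ L <= size s.
Proof.
elim: j C L col => [|j IH] C L col; first exact: mono_windows1.
by apply: mono_windows_step => C' col'; exact: IH.
Qed.

Fixpoint tower (k : nat) : nat := if k is k'.+1 then 2 ^ tower k' else 1.

Lemma ltn_tower k : k < tower k.
Proof. by elim: k => [|k IH] //=; apply: leq_ltn_trans IH _; exact: ltn_expl. Qed.

Lemma leq_tower k l : k <= l -> tower k <= tower l.
Proof.
move=> /subnK <-; elim: (l - k) => [|d IH] //=.
by apply: leq_trans IH _; exact: ltnW (ltn_expl _ _).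
Qed.

Lemma leq_double_exp2 k : k.*2 <= 2 ^ k.
Proof.
elim: k => [|[|k] IH] //; rewrite doubleS expnS.
have : 1 < 2 ^ k.+1 by rewrite -{1}(expn0 2) ltn_exp2l.
lia.
Qed.

Lemma leq_sqr_exp2_exp2 k : k * k <= 2 ^ 2 ^ k.
Proof.
have : k * k <= 4 ^ k.
  elim: k => [|k IH] //; have := ltn_expl k (isT : 1 < 4); rewrite expnS; lia.
move/leq_trans; apply; rewrite (_ : 4 = 2 ^ 2) // -expnM leq_exp2l // mul2n.
exact: leq_double_exp2.
Qed.

Lemma window_ramsey_bound_tower j : forall k q L,
  q <= tower k -> L <= tower k -> j < tower k ->
  window_ramsey_bound j q L <= tower (k + 3 * j.+1).
Proof.
have Hsqr t : t * t <= 2 ^ 2 ^ 2 ^ t.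
  apply: leq_trans (leq_sqr_exp2_exp2 t) _; rewrite leq_exp2l //.
  exact: ltnW (ltn_expl _ _).
elim: j => [|j IH] k q L Hq HL Hj /=.
- by rewrite muln1 addn3; apply: leq_trans (Hsqr (tower k)); exact: leq_mul.
- have -> : k + 3 * j.+2 = k + 3 + 3 * j.+1 by lia.
  apply: IH.
  + rewrite -expnM addn3 leq_exp2l //; apply: leq_trans (leq_sqr_exp2_exp2 _).
    by rewrite mulnC; exact: leq_mul.
  + by apply: leq_trans Hj _; apply: leq_tower; lia.
  + by apply: leq_trans (ltnW Hj) _; apply: leq_tower; lia.
Qed.

Lemma pow_expn m k : Nat.pow m k = m ^ k.
Proof. by elim: k => [|k IH] //=; rewrite expnS IH. Qed.

Lemma pow2_log2_le n : 0 < n -> 2 ^ Nat.log2 n <= n.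
Proof.
move=> /ltP Hn; have [Hlog _] := PeanoNat.Nat.log2_spec n Hn.
by apply/leP; rewrite -pow_expn.
Qed.

Lemma tower_le_of_logstar_aux f : forall n k,
  0 < k -> k <= logstar_aux f n -> tower k <= n.
Proof.
elim: f => [|f IH] n [|k] //= _; case: ifP => // /negbT; rewrite -ltnNge => Hn.
rewrite ltnS; case: k => [|k] Hk; first by [].
apply: leq_trans (pow2_log2_le (ltnW Hn)).
by rewrite leq_exp2l //; exact: IH Hk.
Qed.

Lemma logstar_aux_ge_of_tower k : forall f n,
  k <= f -> tower k <= n -> k <= logstar_aux f n.
Proof.
elim: k => [|k IH] [|f] n //= Hf Hn.
have Hn1 : 1 < n.
  apply: leq_trans Hn; rewrite -[in X in X < _](expn0 2) ltn_exp2l //.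
  exact: leq_ltn_trans (leq0n k) (ltn_tower k).
rewrite ifN -?ltnNge // ltnS; apply: IH => //.
rewrite -(PeanoNat.Nat.log2_pow2 (tower k)); last exact/leP.
by apply/leP/PeanoNat.Nat.log2_le_mono; rewrite pow_expn; exact/leP.
Qed.

Lemma tower_logstar n : 0 < n -> tower (logstar n) <= n.
Proof.
move=> Hn; case: (posnP (logstar n)) => [-> //|Hpos].
exact: tower_le_of_logstar_aux Hpos (leqnn _).
Qed.

Lemma logstar_ge_of_tower k n : tower k <= n -> k <= logstar n.
Proof.
by move=> Hn; apply: (logstar_aux_ge_of_tower (leq_trans (ltnW (ltn_tower k)) Hn) Hn).
Qed.

Definition path_adj (n m : nat) : rel 'I_n :=
  fun u v => (maxn u v < m) && ((u.+1 == v :> nat) || (v.+1 == u :> nat)).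
Arguments path_adj : clear implicits.

Lemma path_simple n m : simple_graph (path_adj n m).
Proof.
split=> [u v|u]; first by rewrite /path_adj maxnC orbC.
by apply/negP => /andP [_ /orP [] /eqP]; lia.
Qed.

Lemma max_degree_le2 n (e : rel 'I_n) (f g : 'I_n -> 'I_n) :
  (forall v u, e v u -> u = f v \/ u = g v) -> max_degree_le e 2.
Proof.
move=> Hfg v; apply: leq_trans (_ : #|[set f v; g v]| <= 2); last first.
  by rewrite cards2; case: (_ != _).
by apply/subset_leq_card/subsetP => u; rewrite !inE => /Hfg [] ->; rewrite eqxx ?orbT.
Qed.

Lemma path_max_degree n m : max_degree_le (path_adj n.+1 m) 2.
Proof.
apply: (@max_degree_le2 _ _ (fun v => inord v.-1) (fun v => inord v.+1)) => v u.
have Hu := ltn_ord u; have Hv := ltn_ord v.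
by case/andP=> _ /orP [] /eqP E; [right|left]; apply: val_inj; rewrite /= inordK; lia.
Qed.

Lemma inord_neighbours n p (u : 'I_n.+1) : 0 < p < n ->
  (u == inord p.-1) || (u == inord p.+1) = (u.+1 == p) || (p.+1 == u).
Proof.
by move=> Hp; rewrite -!val_eqE /= !inordK; lia.
Qed.

Lemma path_adjE n m p (u : 'I_n.+1) : 0 < p -> p.+1 < m -> m <= n.+1 ->
  path_adj n.+1 m (inord p) u = (u == inord p.-1) || (u == inord p.+1).
Proof. by move=> Hp Hpm Hm; rewrite inord_neighbours /path_adj ?inordK; lia. Qed.

Lemma ring_adjE n p (u : 'I_n.+1) : 0 < p < n ->
  @ring_adj n.+1 (inord p) u = (u == inord p.-1) || (u == inord p.+1).
Proof.
move=> Hp; rewrite inord_neighbours // /ring_adj inordK; last lia.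
rewrite (modn_small (_ : p.+1 < n.+1)); last lia.
have [Hu|Hu] := ltnP u n; first by rewrite modn_small; lia.
have -> : u.+1 = n.+1 by have := ltn_ord u; lia.
by rewrite modnn; lia.
Qed.

Definition ids_from (n : nat) (s : seq nat) (v : 'I_n) : nat :=
  nth 0 (s ++ [seq x <- iota 0 n | x \notin s]) v.
Arguments ids_from : clear implicits.

Lemma perm_ids_from n (s : seq nat) : uniq s -> all (fun x => x < n) s ->
  perm_eq (s ++ [seq x <- iota 0 n | x \notin s]) (iota 0 n).
Proof.
move=> Hu /allP Ha; apply: uniq_perm; last 2 first.
- exact: iota_uniq.
- move=> x; rewrite mem_cat mem_filter mem_iota /=.
  by case Hx: (x \in s) => //=; rewrite (Ha x Hx).
rewrite cat_uniq Hu filter_uniq ?iota_uniq //= andbT.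
by apply/hasPn => x; rewrite mem_filter => /andP [].
Qed.

Lemma ids_from_valid c n (s : seq nat) : 0 < c -> uniq s -> all (fun x => x < n) s ->
  valid_ids c (ids_from n s).
Proof.
move=> Hc Hu Ha; have Hperm := perm_ids_from Hu Ha.
have Hsize : size (s ++ [seq x <- iota 0 n | x \notin s]) = n.
  by rewrite (perm_size Hperm) size_iota.
split=> [u v|v].
- rewrite /ids_from => /eqP.
  by rewrite nth_uniq ?Hsize ?(perm_uniq Hperm) ?iota_uniq // => /eqP /val_inj.
- have : ids_from n s v \in iota 0 n by rewrite -(perm_mem Hperm) mem_nth ?Hsize.
  rewrite mem_iota /= pow_expn => /leq_trans; apply.
  by rewrite -[X in X <= _]expn1 leq_pexp2l //; case: (posnP n) v => [->[]|].
Qed.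

Lemma ids_fromE n (s : seq nat) i : i < size s -> i <= n ->
  ids_from n.+1 s (inord i) = nth 0 s i.
Proof. by move=> Hs Hn; rewrite /ids_from inordK // nth_cat Hs. Qed.

Section PathRun.

Variables (A : local_alg) (n : nat).

(* The run of [A] seen from position [i] of a path whose [j]-th vertex has ID
   [nth 0 w j]; it agrees with a genuine run only at positions [i] farther than
   [t] from both ends of [w]. *)
Fixpoint path_state (w : seq nat) (t i : nat) : St A :=
  match t with
  | 0 => @init A n (nth 0 w i)
  | t'.+1 => @step A (path_state w t' i)
      (fun k => if nth 0 w i.-1 == k then Some (path_state w t' i.-1)
                else if nth 0 w i.+1 == k then Some (path_state w t' i.+1) else None)
  end.

Fixpoint path_output (w : seq nat) (t i : nat) : option (nat -> bool) :=
  match t with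
  | 0 => @decide A (path_state w 0 i)
  | t'.+1 => if path_output w t' i is Some o then Some o
             else @decide A (path_state w t'.+1 i)
  end.

Definition path_says (w : seq nat) (t i j : nat) : bool :=
  if path_output w t i is Some o then o (nth 0 w j) else false.

Variables (e : rel 'I_n) (id : 'I_n -> nat) (v : nat -> 'I_n) (w : seq nat).
Hypotheses (Hw : uniq w) (Hid : forall i, i < size w -> id (v i) = nth 0 w i)
  (Hnbr : forall i, 0 < i -> i.+1 < size w ->
            forall u, e (v i) u = (u == v i.-1) || (u == v i.+1)).

Lemma state_path_window t i : t <= i -> i + t < size w ->
  state A e id t (v i) = path_state w t i.
Proof.
elim: t i => [|t IH] i Hti Hs /=.
  by rewrite Hid //; lia.
rewrite IH; [|lia|lia]; congr (step _ _); apply: functional_extensionality => k.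
have Hne : nth 0 w i.-1 != nth 0 w i.+1.
  have Hi0 : i.-1 < size w by lia.
  have Hi1 : i.+1 < size w by lia.
  by rewrite nth_uniq //; lia.
case: pickP => [u /andP [Heu /eqP Hk]|Hnone].
- move: Heu; rewrite Hnbr; try lia.
  case/orP => /eqP Eu; subst u k; rewrite Hid; try lia;
    rewrite ?eqxx ?(negbTE Hne) IH //; lia.
- have := Hnone (v i.-1); have := Hnone (v i.+1).
  by rewrite !Hnbr ?eqxx ?orbT ?Hid //=; try lia; move=> -> ->.
Qed.

Lemma output_path_window t i : t <= i -> i + t < size w ->
  output A e id t (v i) = path_output w t i.
Proof.
elim: t i => [|t IH] i Hti Hs; have /= := state_path_window Hti Hs.
  by move=> /= ->.
by move=> /= ->; rewrite IH //; lia.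
Qed.

End PathRun.

Lemma output_stable A n (e : rel 'I_n) id t v o :
  output A e id t v = Some o -> forall d, output A e id (t + d) v = Some o.
Proof. by move=> H; elim=> [|d IH]; rewrite ?addn0 ?addnS //= IH. Qed.

Lemma output_decided_eq A n (e : rel 'I_n) id t1 t2 v :
  output A e id t1 v <> None -> output A e id t2 v <> None ->
  output A e id t1 v = output A e id t2 v.
Proof.
case E1: (output A e id t1 v) => [o1|] // _; case E2: (output A e id t2 v) => [o2|] // _.
have [le|le] := leqP t1 t2.
- by have := output_stable E1 (t2 - t1); rewrite subnKC // E2.
- by have := output_stable E2 (t1 - t2); rewrite subnKC ?(ltnW le) // E1.
Qed.

Lemma all_decided_monotone A n (e : rel 'I_n) id r1 r2 :
  all_decided A e id r1 -> r1 <= r2 -> all_decided A e id r2.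
Proof.
move=> H le v; have := H v; case E: (output A e id r1 v) => [o|] // _.
by have := output_stable E (r2 - r1); rewrite subnKC // => ->.
Qed.

Lemma size_window (s : seq nat) k i : i + k <= size s -> size (take k (drop i s)) = k.
Proof. by move=> Hi; rewrite size_take size_drop; case: ifP => //; lia. Qed.

Lemma all_window (P : pred nat) (s : seq nat) k i : all P s -> all P (take k (drop i s)).
Proof. by move/allP => Hs; apply/allP => y /mem_take /mem_drop /Hs. Qed.

Lemma size_uniq_bounded N (s : seq nat) : uniq s -> all (fun x => x < N) s -> size s <= N.
Proof.
move=> Hu /allP Hall; rewrite -(size_iota 0 N); apply: uniq_leq_size Hu _.
by move=> y Hy; rewrite mem_iota /= Hall.
Qed.

Lemma path_output_window A n (s : seq nat) k i t j :
  uniq s -> all (fun x => x < n.+1) s -> i + k <= size s -> t <= j -> j + t < k ->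
  output A (path_adj n.+1 (size s)) (ids_from n.+1 s) t (inord (i + j))
  = path_output A n.+1 (take k (drop i s)) t j.
Proof.
move=> Hu Hall Hi Htj Hjk; have Hs := size_uniq_bounded Hu Hall.
apply: (output_path_window A (v := fun j => inord (i + j))) => //;
  rewrite ?size_window //.
- exact/take_uniq/drop_uniq.
- by move=> j' Hj'; rewrite ids_fromE ?nth_take ?nth_drop //; lia.
- move=> j' Hj0 Hj1 u; rewrite path_adjE; try lia.
  by rewrite -addnS; have -> : (i + j').-1 = i + j'.-1 by lia.
Qed.

Lemma ring_output_window A n (w : seq nat) t j :
  uniq w -> size w <= n.+1 -> t <= j -> j + t < size w ->
  output A (@ring_adj n.+1) (ids_from n.+1 w) t (inord j) = path_output A n.+1 w t j.
Proof.
move=> Hu Hw Htj Hjw; apply: (output_path_window A (v := inord)) => // j' Hj'.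
  by rewrite ids_fromE //; lia.
by move=> Hj1 u; rewrite ring_adjE //; lia.
Qed.

(* For [x] of width [2r+2], the middle edge joins positions [r] and [r+1]. *)
Definition middle_edge_selected (A : local_alg) (n r : nat) (x : seq nat) : bool :=
  path_says A n x r r r.+1 && path_says A n x r r.+1 r.

Lemma out_matching_window c A n t (s : seq nat) r i :
  0 < c -> uniq s -> all (fun x => x < n.+1) s ->
  (forall id, valid_ids c id -> all_decided A (@ring_adj n.+1) id t) ->
  all_decided A (path_adj n.+1 (size s)) (ids_from n.+1 s) r ->
  i + (2 * t).+2 <= size s ->
  out_matching A (path_adj n.+1 (size s)) (ids_from n.+1 s) r (inord (i + t))
    (inord (i + t).+1)
  = middle_edge_selected A n.+1 t (take (2 * t).+2 (drop i s)).
Proof.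
move=> Hc Hu Hall Hring Hdec Hi; have Hs := size_uniq_bounded Hu Hall.
set x := take (2 * t).+2 (drop i s).
have Hx : size x = (2 * t).+2 := size_window Hi.
have Hux : uniq x by exact/take_uniq/drop_uniq.
have Hring_x := Hring _ (ids_from_valid Hc Hux (all_window _ _ Hall)).
(* On the ring labelled by [x] both endpoints of the middle edge decide within
   [t] rounds, and there they see the same neighbourhood as on the path. *)
have Hout j : t <= j <= t.+1 ->
    output A (path_adj n.+1 (size s)) (ids_from n.+1 s) r (inord (i + j))
    = path_output A n.+1 x t j.
  move=> Hj; have Hpath t' := @path_output_window A n s _ i t' j Hu Hall Hi.
  rewrite -Hpath; try lia.
  apply: output_decided_eq (Hdec _) _; rewrite Hpath; try lia.
  by rewrite -ring_output_window ?Hx //; try lia; exact: Hring_x.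
rewrite -addnS /out_matching /says !Hout; try lia.
rewrite /path_adj !inordK; try lia.
rewrite /middle_edge_selected /path_says !ids_fromE; try lia.
by rewrite /x !nth_take ?nth_drop; try lia; rewrite maxnSS ?eqxx /=; lia.
Qed.

Lemma matching_partner_unique n (e M : rel 'I_n) v u1 u2 :
  is_matching e M -> M v u1 -> M v u2 -> u1 = u2.
Proof.
move=> [_ [_ Hdeg]] H1 H2; case: (eqVneq u1 u2) => // Hne; exfalso.
have := Hdeg v; rewrite leqNgt => /negP; apply.
apply: leq_trans (_ : #|[set u1; u2]| <= _); first by rewrite cards2 Hne.
by apply/subset_leq_card/subsetP => u; rewrite !inE => /orP [] /eqP ->.
Qed.

Definition even_path_matching (n m : nat) : rel 'I_n :=
  fun u v => path_adj n m u v && ~~ odd (minn u v).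
Arguments even_path_matching : clear implicits.

Lemma even_path_matchingP n m : is_matching (path_adj n.+1 m) (even_path_matching n.+1 m).
Proof.
split; [|split].
- by move=> u v; rewrite /even_path_matching minnC (path_simple n.+1 m).1.
- by move=> u v /andP [].
- move=> v; apply: leq_trans (_ : #|[set inord (if odd v then v.-1 else v.+1)]| <= 1);
    last by rewrite cards1.
  apply/subset_leq_card/subsetP => u; rewrite !inE /even_path_matching /path_adj.
  have Hu := ltn_ord u; have Hv := ltn_ord v.
  case/andP => /andP [_ /orP [] /eqP E] Hodd; apply/eqP/val_inj.
  + rewrite -E (minn_idPl (leqnSn _)) in Hodd.
    by rewrite (negbTE Hodd) /= inordK; lia.
  + rewrite -E (minn_idPr (leqnSn _)) in Hodd.
    by rewrite -E /= (negbTE Hodd) inordK; lia.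
Qed.

Lemma even_path_matching_size n m : m <= n.+1 -> m./2 <= msize (even_path_matching n.+1 m).
Proof.
move=> Hmn.
pose f (j : 'I_m./2) : 'I_n.+1 * 'I_n.+1 := (inord (2 * j), inord (2 * j).+1).
have Hj (j : 'I_m./2) : (2 * j).+1 < m.
  by have := ltn_ord j; have := odd_double_half m; lia.
have Hf : injective f.
  move=> j1 j2 [] /(congr1 val) E _; apply: val_inj; move: E => /=.
  by move: (Hj j1) (Hj j2) => H1 H2; rewrite !inordK; lia.
rewrite -{1}(card_ord m./2) -(card_imset _ Hf) /msize.
apply/subset_leq_card/subsetP => p /imsetP [j _ ->].
have Hjm := Hj j; rewrite inE /= /even_path_matching /path_adj !inordK; lia.
Qed.

Lemma msize_near_ends n m (M : rel 'I_n.+1) r :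
  subrel M (path_adj n.+1 m) ->
  (forall a, r <= a -> a + r + 2 <= m -> M (inord a) (inord a.+1) = false) ->
  msize M <= 2 * r.
Proof.
move=> HMe Hmid.
set P := [set p : 'I_n.+1 * 'I_n.+1 | M p.1 p.2 && (p.1 < p.2)].
have HP p : p \in P -> [/\ p.2 = p.1.+1 :> nat, p.2 < m & p.1 < r \/ m <= p.1 + r + 1].
  case: p => a b; rewrite inE /= => /andP [HM Hab].
  have := HMe _ _ HM; rewrite /path_adj => /andP [Hm /orP [] /eqP E]; last lia.
  split; [by [] | lia |]; case: (ltnP a r) => Har; [by left | right].
  rewrite leqNgt; apply/negP => Hlt; move: (Hmid a Har (ltac:(lia))).
  have -> : inord a = a by apply: val_inj; rewrite /= inordK.
  have Hb := ltn_ord b.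
  have -> : inord a.+1 = b by apply: val_inj; rewrite /= inordK; lia.
  by rewrite HM.
have Hinj : {in P &, injective (fun p : 'I_n.+1 * 'I_n.+1 => p.1)}.
  move=> [a1 b1] [a2 b2] /HP [E1 _ _] /HP [E2 _ _] /= E; subst a2.
  by congr pair; apply: val_inj; move: E1 E2 => /= -> ->.
rewrite /msize -/P -(card_in_imset Hinj).
set l := [seq inord j : 'I_n.+1 | j <- iota 0 r ++ iota (m - r - 1) r].
apply: leq_trans (_ : #|l| <= 2 * r); last first.
  by apply: leq_trans (card_size _) _; rewrite size_map size_cat !size_iota; lia.
apply/subset_leq_card/subsetP => a /imsetP [[a' b] /HP [/= E Hm Hr] ->].
apply/mapP; exists (nat_of_ord a'); last by apply: val_inj; rewrite /= inordK.
by rewrite mem_cat !mem_iota; lia.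
Qed.

Section RingLowerBound.

Variables (rho : R) (c : nat) (A : local_alg) (n : nat).
Hypotheses (Hrho : (0 <= rho)%R) (Hc : 0 < c)
  (Hcorrect : forall (e : rel 'I_n.+1) (id : 'I_n.+1 -> nat),
     simple_graph e -> max_degree_le e 2 -> valid_ids c id -> correct_on rho A e id).

Lemma ring_rounds_bound t m :
  (forall id, valid_ids c id -> all_decided A (@ring_adj n.+1) id t) ->
  (2 * t).+3 <= m -> window_ramsey_bound (2 * t).+1 2 m <= n.+1 ->
  (INR m./2 <= rho * INR (2 * t))%R.
Proof.
move=> Hring Hm HF.
have := @window_ramsey (2 * t).+1 _ m n.+1 (middle_edge_selected A n.+1 t).
rewrite card_bool => /(_ HF) [s [b [[Hsort Hall Hwin] Hsz]]].
have Hu : uniq s := sorted_uniq ltn_trans ltnn Hsort.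
have Hsn := size_uniq_bounded Hu Hall.
have [r [Hdec [_ [Hmatch Happrox]]]] :=
  Hcorrect (path_simple n.+1 (size s)) (@path_max_degree n (size s))
    (ids_from_valid Hc Hu Hall).
set M := out_matching _ _ _ _ in Hmatch Happrox.
have HMw i : i + (2 * t).+2 <= size s -> M (inord (i + t)) (inord (i + t).+1) = b.
  by move=> Hi; rewrite /M (@out_matching_window c A n t s r i) // Hwin.
case: b Hwin HMw => _ HMw.
- have HR1 : M (inord t.+1) (inord t) by rewrite Hmatch.1 (HMw 0) //; lia.
  have := matching_partner_unique Hmatch HR1 (HMw 1 (ltac:(lia))).
  by move/(congr1 val); rewrite /= !inordK; lia.
- have HMsize : msize M <= 2 * t.
    apply: (@msize_near_ends n (size s)); first by move=> u v /andP [].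
    by move=> a Ha Hma; have := HMw (a - t) (ltac:(lia)); rewrite subnK.
  have Hopt := Happrox _ (even_path_matchingP n (size s)).
  have Heven := leq_trans (half_leq Hsz) (even_path_matching_size Hsn).
  have := le_INR _ _ (elimT leP Heven); have := le_INR _ _ (elimT leP HMsize).
  nra.
Qed.

End RingLowerBound.

Lemma uniform_rounds (I : Type) (P : I -> Prop) (D : I -> nat -> Prop) (C rho : R) (L : nat) :
  (0 < C <= 1)%R -> (1 <= rho)%R -> (1 <= INR L)%R ->
  (forall i r r', D i r -> r <= r' -> D i r') ->
  (forall i, P i -> exists r, D i r /\ (INR r < C * INR L / rho)%R) ->
  exists t, (rho * INR t < C * INR L)%R /\ forall i, P i -> D i t.
Proof.
move=> HC Hrho HL Hmono HD; set b := (C * INR L / rho)%R.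
have Hrhob : (rho * b = C * INR L)%R by rewrite /b; field; lra.
have Hbound r : classicb (INR r < b)%R -> r <= L.
  move/classicbP => Hr; apply/ltnW/ltP/INR_lt; nra.
have Hb : (0 < b)%R by apply: Rdiv_lt_0_compat; nra.
have Hex : exists r, classicb (INR r < b)%R by exists 0; apply/classicbP.
have [t /classicbP Ht Hmax] := ex_maxnP Hex Hbound.
exists t; split; first by rewrite -Hrhob; apply: Rmult_lt_compat_l => //; lra.
move=> i /HD [r [Hr Hrb]].
by apply: Hmono Hr _; apply: Hmax; apply/classicbP.
Qed.

Lemma window_budget (rho : R) (t L : nat) :
  (1 <= rho)%R -> 40 <= L -> (rho * INR t < / 40 * INR L)%R ->
  exists m, [/\ (2 * t).+3 <= m, window_ramsey_bound (2 * t).+1 2 m <= tower L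
              & (rho * INR (2 * t) < INR m./2)%R].
Proof.
move=> Hrho HL HRL; set a := L %/ 20.
have Ha : 20 * a <= L < 20 * a.+1.
  by rewrite mulnC leq_divM /= mulnC ltn_ceil.
have Ht40 : 40 * t < L.
  apply/ltP/INR_lt; rewrite mult_INR (_ : INR 40 = 40%R); last by simpl; lra.
  by have := pos_INR t; nra.
exists (2 * a).+2; split; first lia.
- have Htower := ltn_tower (2 * a).+2.
  apply: leq_trans (window_ramsey_bound_tower (k := (2 * a).+2) _ _ _) (leq_tower _); lia.
- have -> : (2 * a).+2./2 = a.+1 by rewrite mul2n -doubleS doubleK.
  have HLa : (INR L <= 20 * INR a + 19)%R.
    have /leP/le_INR : L <= 20 * a + 19 by lia.
    by rewrite plus_INR mult_INR; simpl; lra.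
  by rewrite mult_INR (S_INR a) (_ : INR 2 = 2%R); [lra | simpl; lra].
Qed.

Theorem theorem7p2 :
  exists (C : R) (n0 : nat), (0 < C)%R /\
  forall (rho : R) (c : nat) (A : local_alg) (n : nat),
    (1 <= rho)%R -> (1 <= c)%N -> (n0 <= n)%N ->
    (forall (e : rel 'I_n) (id : 'I_n -> nat),
        simple_graph e -> max_degree_le e 2 -> valid_ids c id ->
        correct_on rho A e id) ->
    exists id : 'I_n -> nat,
      valid_ids c id /\
      forall r : nat, all_decided A (@ring_adj n) id r ->
        (C * INR (logstar n) / rho <= INR r)%R.
Proof.
exists (/ 40)%R, (tower 40); split; first lra.
move=> rho c A n Hrho Hc Hn Hcorrect; apply: NNPP => Hnone.
have HL : 40 <= logstar n := logstar_ge_of_tower Hn.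
have Hn0 : 0 < n := leq_trans (leq_ltn_trans (leq0n 40) (ltn_tower 40)) Hn.
(* Automation would try to evaluate [tower 40]. *)
clear Hn.
have [t [Ht Hdecided]] : exists t, (rho * INR t < / 40 * INR (logstar n))%R /\
    forall id, valid_ids c id -> all_decided A (@ring_adj n) id t.
  apply: uniform_rounds => [||||id Hid]; try lra.
  - exact/(le_INR 1)/leP/(leq_trans _ HL).
  - exact: all_decided_monotone.
  - apply: NNPP => Hslow; apply: Hnone; exists id; split=> // r Hr.
    by apply: Rnot_lt_le => Hrb; apply: Hslow; exists r.
have [m [Hm HF Hmt]] := window_budget Hrho HL Ht.
case: n Hn0 Hcorrect Hdecided HF {Hnone HL Ht} => [//|n] _ Hcorrect Hdecided HF.
have := ring_rounds_bound (ltac:(lra) : (0 <= rho)%R) Hc Hcorrect Hdecided Hm.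
by move/(_ (leq_trans HF (tower_logstar (ltn0Sn n)))); lra.
Qed.
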